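(* Let $K$ be a field with an absolute value $v$, and let $\mathbb{C}_v$ denote the completion of an algebraic closure of $K$. Let $\phi(z)\in K[z]$ be a polynomial of degree $d\geq 2$ with associated local canonical height $\hat{\lambda}_{v,\phi}$. Let $\gamma\in\mathbb{C}_v^{\times}$ and define $\psi(z)=\gamma\,\phi(\gamma^{-1}z)\in\mathbb{C}_v[z]$. Write $\psi(z)=b_d z^d+\cdots+b_0=b_d(z-\beta_1)\cdots(z-\beta_d)$ with $b_d\neq 0$, $\beta_i\in\mathbb{C}_v$, let $A=\max_i|\beta_i|_v$, $B=|b_d|_v^{-1/d}$, and let $c_v=\max\{1,A,B\}$, $C_v=\max\{1,|b_0|_v,\ldots,|b_d|_v\}$ if $v$ is non-archimedean, and $c_v=\max\{1,A+B\}$, $C_v=\max\{1,|b_0|_v+\cdots+|b_d|_v\}$ if $v$ is archimedean. Then for all $x\in\mathbb{C}_v$, $$\frac{-d\log c_v}{d-1}\leq \hat{\lambda}_{v,\phi}(x)-\lambda_v(\gamma x)\leq\frac{\log C_v}{d-1}.$$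
   Context: The standard local height is $\lambda_v(x)=\log\max\{1,|x|_v\}$ for $x\in\mathbb{C}_v$. For a polynomial $f$ with coefficients in $\mathbb{C}_v$ of degree $d\geq 2$, the local canonical height is $\hat{\lambda}_{v,f}(x)=\lim_{n\to\infty}d^{-n}\lambda_v(f^n(x))$ (this limit exists), where $f^n$ is the $n$-th iterate of $f$. *)

From mathcomp Require Import all_boot all_order all_algebra.
From mathcomp Require Import all_classical all_reals all_analysis.
Set Implicit Arguments. Unset Strict Implicit. Unset Printing Implicit Defensive.
Import Order.TTheory GRing.Theory Num.Theory numFieldNormedType.Exports.
Local Open Scope ring_scope.

Definition is_absval (F : fieldType) (R : realType) (abs : F -> R) : Prop :=
  [/\ forall x, 0 <= abs x,
      forall x, abs x = 0 <-> x = 0,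
      forall x y, abs (x * y) = abs x * abs y
    & forall x y, abs (x + y) <= abs x + abs y].

Definition nonarchimedean (F : fieldType) (R : realType) (abs : F -> R) : Prop :=
  forall x y, abs (x + y) <= Num.max (abs x) (abs y).

Definition abs_complete (F : fieldType) (R : realType) (abs : F -> R) : Prop :=
  forall u : nat -> F,
    (forall e : R, 0 < e -> exists N, forall m n, (N <= m)%N -> (N <= n)%N ->
        abs (u m - u n) < e) ->
    exists l, forall e : R, 0 < e -> exists N, forall n, (N <= n)%N -> abs (u n - l) < e.

Definition algebraic_over (K F : fieldType) (iota : {rmorphism K -> F}) (y : F) : Prop :=
  exists p : {poly K}, p != 0 /\ root (map_poly iota p) y.

Definition alg_dense (K F : fieldType) (R : realType) (iota : {rmorphism K -> F})
    (abs : F -> R) : Prop :=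
  forall x (e : R), 0 < e -> exists y, algebraic_over iota y /\ abs (x - y) < e.

Definition loc_height (F : fieldType) (R : realType) (abs : F -> R) (x : F) : R :=
  ln (Num.max 1 (abs x)).

Definition can_height (F : fieldType) (R : realType) (abs : F -> R)
    (f : {poly F}) (x : F) : R :=
  limn ((fun n : nat => ((size f).-1%:R ^- n) * loc_height abs (iter n (fun y => f.[y]) x)) : R^nat).

(* Put lam_n := lambda(psi^n(gamma x)).  Bounding |psi(y)| above by its
   coefficients, and below through its factorisation (once |y| > c, each
   |y - beta_i| is comparable with |y|), puts max(1, |psi(y)|) within the factors
   c^d and C of max(1, |y|)^d, i.e. -d log c <= lam_(n+1) - d lam_n <= log C.
   Summing the geometric series of these defects bounds lim d^-n lam_n between
   lam_0 - d log c / (d - 1) and lam_0 + log C / (d - 1).  Since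
   psi^n(gamma x) = gamma phi^n(x) and multiplying by gamma changes lambda by a
   bounded amount, that limit is the canonical height of x. *)

From mathcomp Require Import all_boot all_order all_algebra.
From mathcomp Require Import all_classical all_reals all_analysis.
From mathcomp Require Import ring lra.
Import Order.TTheory GRing.Theory Num.Theory numFieldNormedType.Exports.
Local Open Scope ring_scope.
Set Implicit Arguments.
Unset Strict Implicit.

Section ScaledSequences.
Variables (R : realType) (D : R).
Hypothesis D_gt1 : 1 < D.

Let D_gt0 : 0 < D. Proof. exact: lt_trans D_gt1. Qed.
Let D_neq0 : D != 0. Proof. by rewrite gt_eqF. Qed.
Let D1_gt0 : 0 < D - 1. Proof. by rewrite subr_gt0. Qed.
Let D1_neq0 : D - 1 != 0. Proof. by rewrite gt_eqF. Qed.
Let Dn_gt0 n : 0 < D ^- n. Proof. by rewrite invr_gt0 exprn_gt0. Qed.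

Lemma bounded_scaled_cvg0 (u : R^nat) (K : R) :
  (forall n, `|u n| <= K) -> ((fun n => D ^- n * u n) @ \oo --> (0 : R))%classic.
Proof.
move=> uK; have Dinv_lt1 : `|D^-1| < 1 by rewrite gtr0_norm ?invr_gt0 // invf_lt1.
have K_cvg0 := cvg_geometric K Dinv_lt1.
apply: (@squeeze_cvgr _ _ _ _ (fun n => - geometric K D^-1 n) (geometric K D^-1)).
- apply: nearW => n; rewrite -ler_norml /geometric /= exprVn normrM.
  by rewrite (gtr0_norm (Dn_gt0 n)) mulrC ler_wpM2r ?(ltW (Dn_gt0 n)).
- by rewrite -oppr0; apply: cvgN.
- exact: K_cvg0.
Qed.

(* e / (D - 1) is the fixed point of t |-> D t - e. *)
Lemma scaled_shift_nondecreasing (a : R^nat) (e : R) :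
  (forall n, - e <= a n.+1 - D * a n) ->
  {homo (fun n => D ^- n * (a n - e / (D - 1))) : n m / (n <= m)%N >-> n <= m}.
Proof.
move=> step; apply/nondecreasing_seqP => n; rewrite -subr_ge0.
have -> : D ^- n.+1 * (a n.+1 - e / (D - 1)) - D ^- n * (a n - e / (D - 1))
        = D ^- n.+1 * (a n.+1 - D * a n + e).
  by rewrite exprS; field; rewrite D1_neq0 expf_neq0 ?D_neq0.
by rewrite mulr_ge0 ?(ltW (Dn_gt0 _)) // -(opprK e) subr_ge0 step.
Qed.

Lemma limn_scaled_bounds (lam s : R^nat) (lo hi K : R) :
  (forall n, - lo <= lam n.+1 - D * lam n <= hi) ->
  (forall n, `|s n - lam n| <= K) ->
  lam 0 - lo / (D - 1) <= limn ((fun n => D ^- n * s n) : R^nat)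
                       <= lam 0 + hi / (D - 1).
Proof.
move=> step sK.
pose v := (fun n => D ^- n * (lam n - lo / (D - 1))) : R^nat.
pose w := (fun n => D ^- n * (lam n + hi / (D - 1))) : R^nat.
have v_nd : {homo v : n m / (n <= m)%N >-> n <= m}.
  by apply: scaled_shift_nondecreasing => n; case/andP: (step n).
have w_ni : {homo w : n m / (n <= m)%N >-> m <= n}.
  move=> n m nm; rewrite -lerN2.
  have stepN k : - hi <= - lam k.+1 - D * - lam k by case/andP: (step k); lra.
  have := @scaled_shift_nondecreasing (fun k => - lam k) hi stepN n m nm.
  by move=> /= le_nm; rewrite /w -!mulrN !opprD.
have v_le_w n : v n <= w n.
  rewrite ler_wpM2l ?(ltW (Dn_gt0 n)) // lerD2l -mulNr ler_wpM2r ?invr_ge0 ?(ltW D1_gt0) //.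
  by case/andP: (step 0%N); lra.
have v_cvg : cvgn v.
  apply: nondecreasing_is_cvgn => //; exists (w 0%N) => _ [n _ <-].
  exact: le_trans (v_le_w n) (w_ni _ _ (leq0n n)).
have -> : limn ((fun n => D ^- n * s n) : R^nat) = limn v.
  have -> : ((fun n => D ^- n * s n) : R^nat)
          = fun n => v n + D ^- n * (s n - lam n + lo / (D - 1)).
    by apply/funext => n; rewrite /v -mulrDr; congr (_ * _); ring.
  apply: cvg_lim => //; rewrite -[limn v]addr0; apply: cvgD => //.
  apply: (@bounded_scaled_cvg0 _ (K + `|lo / (D - 1)|)) => n.
  exact: le_trans (ler_normD _ _) (lerD (sK n) (lexx _)).
have lam0 (t : R) : D ^- 0 * (lam 0 + t) = lam 0 + t by rewrite expr0 invr1 mul1r.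
apply/andP; split; first by have := nondecreasing_cvgn_le v_nd v_cvg 0%N; rewrite /v lam0.
rewrite -(lam0 (hi / (D - 1))); apply: limr_le => //; apply: nearW => n.
exact: le_trans (v_le_w n) (w_ni _ _ (leq0n n)).
Qed.
End ScaledSequences.

Section AbsoluteValue.
Variables (F : fieldType) (R : realType) (abs : F -> R).
Hypothesis habs : is_absval abs.

Lemma abs_ge0 x : 0 <= abs x. Proof. by case: habs. Qed.
Lemma abs_eq0 x : abs x = 0 <-> x = 0. Proof. by case: habs. Qed.
Lemma absM x y : abs (x * y) = abs x * abs y. Proof. by case: habs. Qed.
Lemma ler_absD x y : abs (x + y) <= abs x + abs y. Proof. by case: habs. Qed.

Lemma abs0 : abs 0 = 0. Proof. exact/abs_eq0. Qed.

Lemma abs_gt0 x : x != 0 -> 0 < abs x.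
Proof.
by move=> x0; rewrite lt_neqAle abs_ge0 andbT eq_sym; apply: contra_neq x0 => /abs_eq0.
Qed.

Lemma abs1 : abs 1 = 1.
Proof.
have abs1_sq : abs 1 * abs 1 = abs 1 by rewrite -absM mulr1.
have abs1_neq0 : abs 1 != 0 by rewrite gt_eqF ?abs_gt0 ?oner_neq0.
by apply: (mulfI abs1_neq0); rewrite abs1_sq mulr1.
Qed.

Lemma absX x n : abs (x ^+ n) = abs x ^+ n.
Proof. by elim: n => [|n IHn]; rewrite ?abs1 // !exprS absM IHn. Qed.

Lemma abs_prod (I : Type) (r : seq I) (G : I -> F) :
  abs (\prod_(i <- r) G i) = \prod_(i <- r) abs (G i).
Proof. by elim: r => [|a r IHr]; rewrite ?big_nil ?abs1 // !big_cons absM IHr. Qed.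

Lemma ler_abs_sub x y : abs x - abs y <= abs (x - y).
Proof. by have := ler_absD (x - y) y; rewrite subrK lerBlDr. Qed.

Lemma abs_sub_ultra (hna : nonarchimedean abs) x y :
  abs y < abs x -> abs x <= abs (x - y).
Proof.
move=> yx; have := hna (x - y) y; rewrite subrK le_max.
by case/orP=> // /le_lt_trans /(_ yx); rewrite ltxx.
Qed.

Lemma abs_monomial_le a y i d : (i <= d)%N ->
  abs (a * y ^+ i) <= abs a * Num.max 1 (abs y) ^+ d.
Proof.
move=> id; have m1 : 1 <= Num.max 1 (abs y) by rewrite le_max lexx.
rewrite absM absX ler_wpM2l ?abs_ge0 //.
apply: le_trans (ler_weXn2l m1 id).
by rewrite lerXn2r ?nnegrE ?abs_ge0 ?(le_trans ler01 m1) // le_max lexx orbT.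
Qed.

Lemma loc_height_ge0 x : 0 <= loc_height abs x.
Proof. by rewrite /loc_height ln_ge0 // le_max lexx. Qed.

Lemma loc_height_mul_le x y :
  loc_height abs (x * y) <= loc_height abs x + loc_height abs y.
Proof.
have max1_gt0 (t : R) : 0 < Num.max 1 t by rewrite lt_max ltr01.
rewrite /loc_height -lnM ?posrE // ler_ln ?posrE ?mulr_gt0 // ge_max absM.
by rewrite mulr_ege1 ?le_max ?lexx // ler_pM ?abs_ge0 ?le_max ?lexx ?orbT.
Qed.

Lemma loc_height_scale_dist g x : g != 0 ->
  `|loc_height abs (g * x) - loc_height abs x|
    <= loc_height abs g + loc_height abs g^-1.
Proof.
move=> g0; have := loc_height_mul_le g x; have := loc_height_mul_le g^-1 (g * x).
rewrite mulKf // => ge_lh le_lh.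
have := loc_height_ge0 g; have := loc_height_ge0 g^-1.
by rewrite ler_norml; move=> *; apply/andP; split; lra.
Qed.

End AbsoluteValue.

Section HornerUpperBound.
Variables (F : fieldType) (R : realType) (abs : F -> R).
Hypothesis habs : is_absval abs.
Variables (p : {poly F}) (d : nat).
Hypothesis size_p : size p = d.+1.

Lemma max1_horner_upper_ultra (hna : nonarchimedean abs) y :
  Num.max 1 (abs p.[y])
    <= \big[Num.max/1]_(i < d.+1) abs p`_i * Num.max 1 (abs y) ^+ d.
Proof.
set C := \big[Num.max/1]_(i < d.+1) _.
have C1 : 1 <= C by apply: bigmax_ge_id.
have m1 : 1 <= Num.max 1 (abs y) ^+ d by rewrite exprn_ege1 // le_max lexx.
rewrite ge_max mulr_ege1 //= horner_coef size_p.
elim/big_rec: _ => [|i s _ IHs]; first by rewrite abs0 // mulr_ge0 ?(le_trans ler01).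
apply: le_trans (hna _ _) _; rewrite ge_max IHs andbT.
apply: le_trans (abs_monomial_le habs _ _ (ltnSE (ltn_ord i))) _.
rewrite ler_wpM2r ?(le_trans ler01 m1) //.
by apply: (le_bigmax_seq _ _ xpredT) => //; exact: mem_index_enum.
Qed.

Lemma max1_horner_upper (y : F) :
  Num.max 1 (abs p.[y])
    <= Num.max 1 (\sum_(i < d.+1) abs p`_i) * Num.max 1 (abs y) ^+ d.
Proof.
have m1 : 1 <= Num.max 1 (abs y) ^+ d by rewrite exprn_ege1 // le_max lexx.
have abs_horner : abs p.[y] <= (\sum_(i < d.+1) abs p`_i) * Num.max 1 (abs y) ^+ d.
  rewrite horner_coef size_p mulr_suml.
  elim/big_rec2: _ => [|i s1 s2 _ IHs]; first by rewrite abs0.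
  apply: le_trans (ler_absD habs _ _) _; rewrite lerD //.
  by apply: (abs_monomial_le habs); rewrite -ltnS.
rewrite ge_max mulr_ege1 ?le_max ?lexx //=; apply: le_trans abs_horner _.
by rewrite ler_wpM2r ?(le_trans ler01 m1) // le_max lexx orbT.
Qed.

End HornerUpperBound.

Section FactoredLowerBound.
Variables (F : fieldType) (R : realType) (abs : F -> R).
Hypothesis habs : is_absval abs.
Variables (p : {poly F}) (d : nat) (b : F) (rs : seq F).
Hypotheses (d_gt0 : (0 < d)%N) (b_neq0 : b != 0) (size_rs : size rs = d)
  (horner_p : forall y, p.[y] = b * \prod_(r <- rs) (y - r)).

Let A := \big[Num.max/0]_(r <- rs) abs r.
Let B := powR (abs b) (- (d%:R)^-1).

Let A_ge0 : 0 <= A. Proof. exact: bigmax_ge_id. Qed.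
Let abs_root_le r : r \in rs -> abs r <= A.
Proof. by move=> r_rs; apply: (le_bigmax_seq _ _ xpredT). Qed.
Let abs_b_gt0 : 0 < abs b. Proof. exact: abs_gt0. Qed.
Let B_gt0 : 0 < B. Proof. exact: powR_gt0. Qed.

Let abs_b_B : abs b * B ^+ d = 1.
Proof.
have d_neq0 : (d%:R : R) != 0 by rewrite pnatr_eq0 -lt0n.
have -> : B ^+ d = (abs b)^-1.
  by rewrite -powR_mulrn ?powR_ge0 // -powRrM mulNr mulVf // powR_inv1 ?(abs_ge0 habs).
by rewrite mulfV // gt_eqF.
Qed.

Lemma abs_horner_factored_ge y E :
  0 <= E -> (forall r, r \in rs -> E <= abs (y - r)) ->
  abs b * E ^+ d <= abs p.[y].
Proof.
move=> E0 E_le; rewrite horner_p (absM habs) (abs_prod habs).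
rewrite ler_wpM2l ?(abs_ge0 habs) // -size_rs.
elim: rs E_le => [|r s IHs] E_le; first by rewrite big_nil.
rewrite big_cons exprS ler_pM ?exprn_ge0 ?E_le ?mem_head //.
by apply: IHs => r' r'_s; rewrite E_le // in_cons r'_s orbT.
Qed.

Lemma max1_horner_lower_of_far c : 1 <= c ->
  (forall y, c < abs y -> abs y ^+ d <= c ^+ d * abs p.[y]) ->
  forall y, Num.max 1 (abs y) ^+ d <= c ^+ d * Num.max 1 (abs p.[y]).
Proof.
move=> c1 far y; have c0 : 0 <= c by apply: le_trans c1.
have max1_ge1 (t : R) : 1 <= Num.max 1 t by rewrite le_max lexx.
have [y_le_c | c_lt_y] := leP (abs y) c.
  apply: le_trans (ler_peMr (exprn_ge0 _ c0) (max1_ge1 _)).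
  by rewrite lerXn2r ?nnegrE ?(le_trans ler01 (max1_ge1 _)) // ge_max c1.
have -> : Num.max 1 (abs y) = abs y by rewrite max_r // (le_trans c1) // ltW.
apply: le_trans (far y c_lt_y) _.
by rewrite ler_wpM2l ?exprn_ge0 // le_max lexx orbT.
Qed.

Lemma max1_horner_lower_ultra (hna : nonarchimedean abs) y :
  Num.max 1 (abs y) ^+ d <= Num.max 1 (Num.max A B) ^+ d * Num.max 1 (abs p.[y]).
Proof.
set c := Num.max 1 (Num.max A B).
apply: max1_horner_lower_of_far => [|{}y c_lt_y]; first by rewrite le_max lexx.
have [A_le_c B_le_c] : A <= c /\ B <= c by rewrite !le_max !lexx !orbT.
have far_roots r : r \in rs -> abs y <= abs (y - r).
  move=> r_rs; apply: abs_sub_ultra => //.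
  exact: le_lt_trans (abs_root_le r_rs) (le_lt_trans A_le_c c_lt_y).
apply: le_trans (_ : c ^+ d * (abs b * abs y ^+ d) <= _); last first.
  by rewrite ler_wpM2l ?exprn_ge0 ?abs_horner_factored_ge ?(abs_ge0 habs) //
       (le_trans ler01) // le_max lexx.
rewrite mulrCA -[X in X <= _]mul1r -abs_b_B -mulrA ler_wpM2l ?(abs_ge0 habs) //.
by rewrite ler_wpM2r ?exprn_ge0 ?(abs_ge0 habs) // lerXn2r ?nnegrE ?(ltW B_gt0) //
     (le_trans ler01) // le_max lexx.
Qed.

Lemma max1_horner_lower y :
  Num.max 1 (abs y) ^+ d <= Num.max 1 (A + B) ^+ d * Num.max 1 (abs p.[y]).
Proof.
set c := Num.max 1 (A + B).
apply: max1_horner_lower_of_far => [|{}y c_lt_y]; first by rewrite le_max lexx.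
have AB_le_c : A + B <= c by rewrite le_max lexx orbT.
have far_roots r : r \in rs -> abs y - A <= abs (y - r).
  by move=> r_rs; apply: le_trans (ler_abs_sub habs y r); rewrite lerB // abs_root_le.
have c1 : 1 <= c by rewrite le_max lexx.
have A0 := A_ge0; have B0 := B_gt0.
have [c0 yA0] : 0 <= c /\ 0 <= abs y - A by split; lra.
have B_y_le : B * abs y <= c * (abs y - A).
  rewrite -subr_ge0 (_ : _ - _ = (abs y - c) * (c - B) + c * (c - B - A)); last by ring.
  by rewrite addr_ge0 ?mulr_ge0 //; lra.
apply: le_trans (_ : c ^+ d * (abs b * (abs y - A) ^+ d) <= _); last first.
  by rewrite ler_wpM2l ?exprn_ge0 ?abs_horner_factored_ge ?(abs_ge0 habs) //
       (le_trans ler01) // le_max lexx.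
rewrite mulrCA -exprMn -[X in X <= _]mul1r -abs_b_B -mulrA -exprMn.
rewrite ler_wpM2l ?(abs_ge0 habs) //.
by rewrite lerXn2r ?nnegrE ?mulr_ge0 ?(ltW B_gt0) ?(abs_ge0 habs) // mulrC.
Qed.

End FactoredLowerBound.

Lemma size_conj_poly (F : fieldType) (f : {poly F}) (g : F) : g != 0 ->
  size (g *: (f \Po (g^-1 *: 'X))) = size f.
Proof.
move=> g0; rewrite size_scale // size_comp_poly2 // size_scale ?invr_eq0 //.
exact: size_polyX.
Qed.

Lemma iter_horner_conj (F : fieldType) (f : {poly F}) (g : F) n x : g != 0 ->
  iter n (fun y => (g *: (f \Po (g^-1 *: 'X))).[y]) (g * x)
    = g * iter n (fun y => f.[y]) x.
Proof.
move=> g0; elim: n => [|n /= ->] //.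
by rewrite hornerZ horner_comp hornerZ hornerX mulKf.
Qed.

Section CanonicalHeight.
Variables (F : fieldType) (R : realType) (abs : F -> R).
Hypothesis habs : is_absval abs.
Variables (d : nat) (c C : R).
Hypotheses (c_gt0 : 0 < c) (C_gt0 : 0 < C).

Lemma loc_height_horner_bounds (p : {poly F}) y :
  Num.max 1 (abs p.[y]) <= C * Num.max 1 (abs y) ^+ d ->
  Num.max 1 (abs y) ^+ d <= c ^+ d * Num.max 1 (abs p.[y]) ->
  - (d%:R * ln c) <= loc_height abs p.[y] - d%:R * loc_height abs y <= ln C.
Proof.
have max1_gt0 (t : R) : 0 < Num.max 1 t by rewrite lt_max ltr01.
rewrite /loc_height; set P := Num.max 1 (abs p.[y]); set m := Num.max 1 (abs y).
move=> up low.
have ln_up : ln P <= ln C + ln (m ^+ d).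
  by rewrite -lnM ?posrE ?exprn_gt0 ?max1_gt0 // ler_ln ?posrE ?mulr_gt0 ?exprn_gt0 ?max1_gt0.
have ln_low : ln (m ^+ d) <= ln (c ^+ d) + ln P.
  by rewrite -lnM ?posrE ?exprn_gt0 ?max1_gt0 // ler_ln ?posrE ?mulr_gt0 ?exprn_gt0 ?max1_gt0.
have lnX (t : R) : 0 < t -> ln (t ^+ d) = d%:R * ln t by move=> t0; rewrite lnXn // mulr_natl.
rewrite !lnX ?max1_gt0 // in ln_up ln_low.
by apply/andP; split; lra.
Qed.

Variables (f : {poly F}) (gamma : F).
Hypotheses (d_gt1 : (1 < d)%N) (size_f : size f = d.+1) (gamma_neq0 : gamma != 0).

Lemma can_height_bounds :
  let psi := gamma *: (f \Po (gamma^-1 *: 'X)) in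
  (forall y, Num.max 1 (abs psi.[y]) <= C * Num.max 1 (abs y) ^+ d) ->
  (forall y, Num.max 1 (abs y) ^+ d <= c ^+ d * Num.max 1 (abs psi.[y])) ->
  forall x, - (d%:R * ln c) / (d%:R - 1)
              <= can_height abs f x - loc_height abs (gamma * x) <= ln C / (d%:R - 1).
Proof.
move=> psi up low x.
pose orbit_height n := loc_height abs (iter n (fun y => psi.[y]) (gamma * x)).
have step n : - (d%:R * ln c) <= orbit_height n.+1 - d%:R * orbit_height n <= ln C.
  exact: loc_height_horner_bounds.
have near_orbit n : `|loc_height abs (iter n (fun y => f.[y]) x) - orbit_height n|
    <= loc_height abs gamma + loc_height abs gamma^-1.
  rewrite /orbit_height iter_horner_conj // distrC; exact: loc_height_scale_dist.
have d_gt1R : (1 : R) < d%:R by rewrite ltr1n.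
have := limn_scaled_bounds d_gt1R step near_orbit.
rewrite /can_height size_f /orbit_height /= !mulNr => /andP[lo hi].
by apply/andP; split; lra.
Qed.

End CanonicalHeight.

Theorem corollary2p6
  (K : fieldType) (F : closedFieldType) (R : realType)
  (iota : {rmorphism K -> F}) (abs : F -> R)
  (habs : is_absval abs) (hcomp : abs_complete abs) (hdense : alg_dense iota abs)
  (phi : {poly K}) (d : nat) (hd : (2 <= d)%N) (hsize : size phi = d.+1)
  (gamma : F) (hgamma : gamma != 0)
  (rs : seq F)
  (hfact : gamma *: (map_poly iota phi \Po (gamma^-1 *: 'X)) =
           lead_coef (gamma *: (map_poly iota phi \Po (gamma^-1 *: 'X))) *:
             \prod_(r <- rs) ('X - r%:P)) :
  let psi := gamma *: (map_poly iota phi \Po (gamma^-1 *: 'X)) in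
  let A := \big[Num.max/0]_(r <- rs) abs r in
  let B := powR (abs (lead_coef psi)) (- (d%:R)^-1) in
  let diff := fun x => can_height abs (map_poly iota phi) x - loc_height abs (gamma * x) in
  (nonarchimedean abs ->
     let c := Num.max 1 (Num.max A B) in
     let C := \big[Num.max/1]_(i < d.+1) abs psi`_i in
     forall x : F, - (d%:R * ln c) / (d%:R - 1) <= diff x <= ln C / (d%:R - 1)) /\
  (~ nonarchimedean abs ->
     let c := Num.max 1 (A + B) in
     let C := Num.max 1 (\sum_(i < d.+1) abs psi`_i) in
     forall x : F, - (d%:R * ln c) / (d%:R - 1) <= diff x <= ln C / (d%:R - 1)).
Proof.
move=> psi A B diff.
have size_f : size (map_poly iota phi) = d.+1 by rewrite size_map_poly.
have size_psi : size psi = d.+1 by rewrite size_conj_poly.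
have b_neq0 : lead_coef psi != 0 by rewrite lead_coef_eq0 -size_poly_eq0 size_psi.
have psi_factored : psi = lead_coef psi *: \prod_(r <- rs) ('X - r%:P) := hfact.
have size_rs : size rs = d.
  apply/eqP; rewrite -eqSS -(size_prod_XsubC rs id) -(size_scale _ b_neq0).
  by rewrite -psi_factored size_psi.
have horner_psi y : psi.[y] = lead_coef psi * \prod_(r <- rs) (y - r).
  by rewrite [in LHS]psi_factored hornerZ horner_prod; under eq_bigr do rewrite hornerXsubC.
have d_gt0 : (0 < d)%N by apply: leq_trans hd.
have max1_gt0 (t : R) : 0 < Num.max 1 t by rewrite lt_max ltr01.
split=> [hna | _] c C x; apply: can_height_bounds; rewrite ?max1_gt0 //.
- by rewrite (lt_le_trans ltr01) // bigmax_ge_id.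
- exact: max1_horner_upper_ultra.
- exact: max1_horner_lower_ultra.
- exact: max1_horner_upper.
- exact: max1_horner_lower.
Qed.
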